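(* Let $H=\sum_{i,j=1}^n\left(\tfrac12\mu_{ij}p_ip_j+\tfrac12\kappa_{ij}q_iq_j+\tfrac12\gamma_{ij}p_iq_j+\tfrac12\gamma_{ji}q_ip_j\right)$ with $\mu,\kappa$ real symmetric, $\gamma$ real, and $[p_i,q_j]=-i\delta_{ij}$, $[p_i,p_j]=[q_i,q_j]=0$ ($p_i,q_i$ Hermitian). If $H$ is Dirac diagonalizable and $H=\sum_{i=1}^n\omega_id_i^\dagger d_i+C=\sum_{i=1}^n\omega_i'd_i'^\dagger d_i'+C'$ are two diagonalized forms, then the multisets $\{\omega_1,\dots,\omega_n\}$ and $\{\omega_1',\dots,\omega_n'\}$ coincide; i.e., the diagonalized form is unique up to a permutation of the quadratic terms.
   Context: A diagonalized (Dirac) form of $H$ is an expression $H=\sum_i\omega_id_i^\dagger d_i+C$ with $\omega_i,C$ real, where $d_1,\dots,d_n$ are complex linear combinations of $p_1,\dots,p_n,q_1,\dots,q_n$ satisfying $[d_i,d_j^\dagger]=\delta_{ij}$, $[d_i,d_j]=0$. $H$ is Dirac diagonalizable if such a form exists. *)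

From HB Require Import structures.
From mathcomp Require Import all_boot all_order all_algebra.
From mathcomp Require Import complex.
From mathcomp Require Import reals.
Set Implicit Arguments. Unset Strict Implicit. Unset Printing Implicit Defensive.
Import Order.TTheory GRing.Theory Num.Theory.
Local Open Scope ring_scope.
Local Open Scope complex_scope.

Definition comm (A : nzRingType) (x y : A) : A := x * y - y * x.

Definition is_star (R : realType) (A : algType R[i]) (st : A -> A) : Prop :=
  [/\ forall x y, st (x + y) = st x + st y,
      forall (c : R[i]) x, st (c *: x) = c^* *: st x,
      forall x y, st (x * y) = st y * st x &
      forall x, st (st x) = x].

Definition CCR (R : realType) (A : algType R[i]) (st : A -> A) (n : nat)
  (p q : 'I_n -> A) : Prop :=
  [/\ forall i, st (p i) = p i,
      forall i, st (q i) = q i,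
      forall i j, comm (p i) (q j) = (- 'i * (i == j)%:R)%:A,
      forall i j, comm (p i) (p j) = 0 &
      forall i j, comm (q i) (q j) = 0].

Definition quadH (R : realType) (A : algType R[i]) (n : nat)
  (mu kappa gamma : 'M[R]_n) (p q : 'I_n -> A) : A :=
  \sum_(i < n) \sum_(j < n)
     ( ((mu i j / 2)%:C) *: (p i * p j)
     + ((kappa i j / 2)%:C) *: (q i * q j)
     + ((gamma i j / 2)%:C) *: (p i * q j)
     + ((gamma j i / 2)%:C) *: (q i * p j)).

Definition diag_form (R : realType) (A : algType R[i]) (st : A -> A) (n : nat)
  (p q : 'I_n -> A) (H : A) (omega : 'I_n -> R) (c : R) (d : 'I_n -> A) : Prop :=
  [/\ exists a b : 'M[R[i]]_n,
        forall i, d i = \sum_(j < n) (a i j *: p j + b i j *: q j),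
      forall i j, comm (d i) (st (d j)) = (i == j)%:R,
      forall i j, comm (d i) (d j) = 0 &
      H = \sum_(i < n) ((omega i)%:C *: (st (d i) * d i)) + (c%:C)%:A].

Definition dirac_diagonalizable (R : realType) (A : algType R[i]) (st : A -> A)
  (n : nat) (p q : 'I_n -> A) (H : A) : Prop :=
  exists omega c d, @diag_form R A st n p q H omega c d.

(** The lowering operators d_i of a Dirac form satisfy [H, d_i] = -ω_i d_i
    and [H, d_i^†] = ω_i d_i^†.  The 2n operators d_i, d_i^† span all linear
    forms in p, q, because their matrix of commutators is invertible; hence
    each d'_j of a second Dirac form expands as Σ α_ji d_i + β_ji d_i^†.
    Comparing [H, d'_j] computed in both forms shows α_ji = 0 unless
    ω_i = ω'_j, and the relations [d'_j, d'_k^†] = δ_jk read α α^* = 1 + β β^*.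
    The block of α with rows {j | ω'_j = λ} and columns {i | ω_i = λ} thus has
    an invertible Gram matrix, so #{j | ω'_j = λ} <= #{i | ω_i = λ}; by
    symmetry the multiplicities agree. *)

From HB Require Import structures.
From mathcomp Require Import all_boot all_order all_algebra.
From mathcomp Require Import complex.
From mathcomp Require Import reals.
From mathcomp Require Import ring.
Set Implicit Arguments. Unset Strict Implicit. Unset Printing Implicit Defensive.
Import Order.TTheory GRing.Theory Num.Theory.
Local Open Scope ring_scope.
Local Open Scope complex_scope.

Section Commutator.
Variables (R : realType) (A : algType R[i]).
Implicit Types x y z : A.

Lemma commC x y : comm x y = - comm y x.
Proof. by rewrite /comm opprB. Qed.

Lemma commDl x y z : comm (x + y) z = comm x z + comm y z.
Proof. by rewrite /comm mulrDl mulrDr opprD addrACA. Qed.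

Lemma commDr x y z : comm x (y + z) = comm x y + comm x z.
Proof. by rewrite commC commDl opprD -!commC. Qed.

Lemma commZl (a : R[i]) x y : comm (a *: x) y = a *: comm x y.
Proof. by rewrite /comm -scalerAl -scalerAr scalerBr. Qed.

Lemma commZr (a : R[i]) x y : comm x (a *: y) = a *: comm x y.
Proof. by rewrite commC commZl -scalerN -commC. Qed.

Lemma comm_suml I r (P : pred I) (F : I -> A) y :
  comm (\sum_(i <- r | P i) F i) y = \sum_(i <- r | P i) comm (F i) y.
Proof.
have comm0l : comm 0 y = 0 by rewrite /comm mul0r mulr0 subrr.
by rewrite (big_morph (fun x => comm x y) (fun a b => commDl a b y) comm0l).
Qed.

Lemma comm_sumr I r (P : pred I) (F : I -> A) y :
  comm y (\sum_(i <- r | P i) F i) = \sum_(i <- r | P i) comm y (F i).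
Proof.
rewrite commC comm_suml -sumrN.
by apply: eq_bigr => i _; rewrite -commC.
Qed.

Lemma comm_algl (a : R[i]) y : comm a%:A y = 0.
Proof. by rewrite /comm mulr_algl mulr_algr subrr. Qed.

Lemma commMl x y z : comm (x * y) z = x * comm y z + comm x z * y.
Proof. by rewrite /comm mulrBr mulrBl !mulrA addrA subrK. Qed.

End Commutator.

Section ConjugateTranspose.
Variable R : realType.

Definition ctrmx m k (M : 'M[R[i]]_(m, k)) : 'M_(k, m) := (map_mx conjc M)^T.

Lemma ctrmx_mul m k l (M : 'M[R[i]]_(m, k)) (N : 'M_(k, l)) :
  ctrmx (M *m N) = ctrmx N *m ctrmx M.
Proof. by rewrite /ctrmx map_mxM trmx_mul. Qed.

Lemma mul_ctrmx_rv m (w : 'rV[R[i]]_m) :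
  (w *m ctrmx w) 0 0 = \sum_(i < m) w 0 i * (w 0 i)^*.
Proof. by rewrite mxE; apply: eq_bigr => i _; rewrite !mxE. Qed.

Lemma mul_ctrmx_rv_ge0 m (w : 'rV[R[i]]_m) : 0 <= (w *m ctrmx w) 0 0.
Proof. by rewrite mul_ctrmx_rv; apply: sumr_ge0 => i _; apply: mulcJ_ge0. Qed.

Lemma mul_ctrmx_rv_eq0 m (w : 'rV[R[i]]_m) : (w *m ctrmx w) 0 0 = 0 -> w = 0.
Proof.
rewrite mul_ctrmx_rv => /psumr_eq0P w0; apply/rowP => i; rewrite mxE.
have /eqP := w0 (fun _ _ => mulcJ_ge0 _) i isT.
by rewrite -sqr_normc sqrf_eq0 normr_eq0 => /eqP.
Qed.

(* A Gram matrix dominating the identity is positive definite, hence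
   invertible, which bounds the number of rows by the number of columns. *)
Lemma gram_1D_rows_leq m k l (M : 'M[R[i]]_(m, k)) (N : 'M_(m, l)) :
  M *m ctrmx M = 1%:M + N *m ctrmx N -> (m <= k)%N.
Proof.
move=> gramM; have : M *m ctrmx M \in unitmx.
  rewrite unitmxE unitfE; apply/negP => /det0P [v v_neq0 vM0].
  have : (v *m (M *m ctrmx M) *m ctrmx v) 0 0 = 0 by rewrite vM0 mul0mx mxE.
  rewrite gramM mulmxDr mulmx1 mulmxDl mxE.
  have -> : v *m (N *m ctrmx N) *m ctrmx v = (v *m N) *m ctrmx (v *m N).
    by rewrite ctrmx_mul !mulmxA.
  move/eqP; rewrite paddr_eq0 ?mul_ctrmx_rv_ge0 //.
  move=> /andP[/eqP/mul_ctrmx_rv_eq0 v0 _].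
  by rewrite v0 eqxx in v_neq0.
move/mxrank_unit <-.
exact: leq_trans (mxrankM_maxl _ _) (rank_leq_col _).
Qed.

Lemma card_leq_of_gram (I J : finType) (S : {set I}) (T : {set J})
    (al be : J -> I -> R[i]) :
  (forall j k, \sum_i (al j i * (al k i)^* - be j i * (be k i)^*) = (j == k)%:R) ->
  (forall j i, j \in T -> i \notin S -> al j i = 0) ->
  (#|T| <= #|S|)%N.
Proof.
move=> gram al0.
pose M : 'M[R[i]]_(#|T|, #|S|) := \matrix_(j, i) al (enum_val j) (enum_val i).
pose N : 'M[R[i]]_(#|T|, #|I|) := \matrix_(j, i) be (enum_val j) (enum_val i).
apply: (@gram_1D_rows_leq _ _ _ M N); apply/matrixP => j k; rewrite !mxE.
have /eqP := gram (enum_val j) (enum_val k).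
rewrite sumrB subr_eq (inj_eq enum_val_inj) => /eqP gram_jk.
have -> : \sum_j0 N j j0 * ctrmx N j0 k =
    \sum_i be (enum_val j) i * (be (enum_val k) i)^*.
  by rewrite [RHS]big_enum_val; apply: eq_bigr => i _; rewrite !mxE.
rewrite -gram_jk (bigID (mem S)) /= [X in _ + X]big1 => [|i notS]; last first.
  by rewrite al0 ?enum_valP ?mul0r.
by rewrite addr0 [RHS]big_enum_val; apply: eq_bigr => i _; rewrite !mxE.
Qed.

End ConjugateTranspose.

Section Star.
Variables (R : realType) (A : algType R[i]) (st : A -> A).
Hypothesis st_star : is_star st.

Lemma stD (u v : A) : st (u + v) = st u + st v. Proof. by case: st_star. Qed.
Lemma stZ (a : R[i]) (u : A) : st (a *: u) = a^* *: st u. Proof. by case: st_star. Qed.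
Lemma stM (u v : A) : st (u * v) = st v * st u. Proof. by case: st_star. Qed.
Lemma stK (u : A) : st (st u) = u. Proof. by case: st_star. Qed.

Lemma st0 : st 0 = 0.
Proof. by have := stZ 0 0; rewrite rmorph0 !scale0r. Qed.

Lemma stN (u : A) : st (- u) = - st u.
Proof. by rewrite -scaleN1r stZ rmorphN1 scaleN1r. Qed.

Lemma st_sum I r (P : pred I) (F : I -> A) :
  st (\sum_(i <- r | P i) F i) = \sum_(i <- r | P i) st (F i).
Proof. exact: (big_morph st stD st0). Qed.

Lemma st_comm (u v : A) : st (comm u v) = comm (st v) (st u).
Proof. by rewrite /comm stD stN !stM. Qed.

Variable n : nat.

Section DiracModes.
Variable d : 'I_n -> A.
Hypothesis comm_d_std : forall i j, comm (d i) (st (d j)) = (i == j)%:R.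
Hypothesis comm_d_d : forall i j, comm (d i) (d j) = 0.
Implicit Types x y : 'I_n -> R[i].

Definition mode_comb (x y : 'I_n -> R[i]) : A :=
  \sum_(l < n) (x l *: d l + y l *: st (d l)).

Definition dirac_sum (om : 'I_n -> R) (c : R) : A :=
  \sum_(i < n) ((om i)%:C *: (st (d i) * d i)) + (c%:C)%:A.

Lemma comm_std_std i j : comm (st (d i)) (st (d j)) = 0.
Proof. by rewrite -st_comm comm_d_d st0. Qed.

Lemma comm_mode_comb_std x y i : comm (mode_comb x y) (st (d i)) = (x i)%:A.
Proof.
rewrite comm_suml (bigD1 i) //= big1 => [|l /negbTE li].
  by rewrite commDl !commZl comm_d_std comm_std_std scaler0 addr0 eqxx addr0.
by rewrite commDl !commZl comm_d_std comm_std_std li !scaler0 addr0.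
Qed.

Lemma comm_mode_comb_d x y i : comm (mode_comb x y) (d i) = (- y i)%:A.
Proof.
rewrite comm_suml (bigD1 i) //= big1 => [|l /negbTE li].
  by rewrite commDl !commZl comm_d_d commC comm_d_std eqxx scaler0 add0r addr0
    scalerN scaleNr.
by rewrite commDl !commZl comm_d_d commC comm_d_std eq_sym li oppr0 !scaler0
  addr0.
Qed.

Lemma st_mode_comb x y :
  st (mode_comb x y) = mode_comb (fun l => (y l)^*) (fun l => (x l)^*).
Proof.
by rewrite st_sum; apply: eq_bigr => l _; rewrite stD !stZ stK addrC.
Qed.

Lemma comm_mode_comb x y (x' y' : 'I_n -> R[i]) :
  comm (mode_comb x y) (st (mode_comb x' y')) =
  (\sum_(l < n) (x l * (x' l)^* - y l * (y' l)^*))%:A.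
Proof.
rewrite st_mode_comb comm_sumr scaler_suml; apply: eq_bigr => l _.
rewrite commDr !commZr comm_mode_comb_std comm_mode_comb_d !scalerA -scalerDl.
by congr (_ *: 1); ring.
Qed.

Lemma comm_dirac_sum_d om c k : comm (dirac_sum om c) (d k) = - (om k)%:C *: d k.
Proof.
rewrite commDl comm_algl addr0 comm_suml (bigD1 k) //= big1 => [|i /negbTE ik].
  rewrite commZl commMl comm_d_d mulr0 add0r commC comm_d_std eqxx.
  by rewrite mulN1r scalerN scaleNr addr0.
by rewrite commZl commMl comm_d_d mulr0 add0r commC comm_d_std eq_sym ik
  oppr0 mul0r scaler0.
Qed.

Lemma comm_dirac_sum_std om c k :
  comm (dirac_sum om c) (st (d k)) = (om k)%:C *: st (d k).
Proof.
rewrite commDl comm_algl addr0 comm_suml (bigD1 k) //= big1 => [|i /negbTE ik].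
  by rewrite commZl commMl comm_std_std mul0r addr0 comm_d_std eqxx mulr1 addr0.
by rewrite commZl commMl comm_std_std mul0r addr0 comm_d_std ik mulr0 scaler0.
Qed.

Lemma mode_comb_eigen om c (w : R) x y i :
  comm (dirac_sum om c) (mode_comb x y) = - w%:C *: mode_comb x y ->
  om i != w -> x i = 0.
Proof.
have -> : comm (dirac_sum om c) (mode_comb x y) =
    mode_comb (fun l => - (om l)%:C * x l) (fun l => (om l)%:C * y l).
  rewrite comm_sumr; apply: eq_bigr => l _.
  rewrite commDr !commZr comm_dirac_sum_d comm_dirac_sum_std !scalerA.
  by rewrite [x l * _]mulrC [y l * _]mulrC.
move=> /(congr1 (fun z => comm z (st (d i)))); rewrite commZl !comm_mode_comb_std.
rewrite scalerA => /(fmorph_inj (in_alg A)) /eqP.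
rewrite -subr_eq0 -mulrBl mulf_eq0 subr_eq0 eqr_opp (inj_eq (@complexI _)).
by case/orP=> [->|/eqP].
Qed.

End DiracModes.

Section CanonicalPairs.
Variables p q : 'I_n -> A.
Hypothesis pq_ccr : CCR st p q.

Definition ccr_gen (a : 'I_(n + n)) : A :=
  match split a with inl i => p i | inr i => q i end.

Definition lin (u : 'rV[R[i]]_(n + n)) : A := \sum_a u 0 a *: ccr_gen a.

Definition ccr_mx : 'M[R[i]]_(n + n) := block_mx 0 (- 'i)%:M 'i%:M 0.

Lemma st_ccr_gen a : st (ccr_gen a) = ccr_gen a.
Proof. by case: pq_ccr => stp stq _ _ _; rewrite /ccr_gen; case: split. Qed.

Lemma comm_ccr_gen a b : comm (ccr_gen a) (ccr_gen b) = (ccr_mx a b)%:A.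
Proof.
case: pq_ccr => _ _ comm_pq comm_pp comm_qq.
rewrite /ccr_gen -[a]splitK -[b]splitK !unsplitK.
case: (split a) => i; case: (split b) => j /=.
- by rewrite comm_pp block_mxEul mxE scale0r.
- by rewrite comm_pq block_mxEur !mxE mulr_natr.
- by rewrite commC comm_pq block_mxEdl !mxE eq_sym -scaleNr mulNr opprK mulr_natr.
- by rewrite comm_qq block_mxEdr mxE scale0r.
Qed.

Lemma st_lin (u : 'rV[R[i]]_(n + n)) : st (lin u) = lin (map_mx conjc u).
Proof.
by rewrite st_sum; apply: eq_bigr => a _; rewrite stZ st_ccr_gen mxE.
Qed.

Lemma comm_lin (u v : 'rV[R[i]]_(n + n)) :
  comm (lin u) (lin v) = ((u *m ccr_mx *m v^T) 0 0)%:A.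
Proof.
rewrite comm_suml; under eq_bigr do rewrite comm_sumr.
rewrite exchange_big mxE scaler_suml; apply: eq_bigr => b _.
rewrite !mxE mulr_suml scaler_suml; apply: eq_bigr => a _.
by rewrite commZl commZr comm_ccr_gen !mxE !scalerA mulrAC.
Qed.

Lemma lin_mul m (w : 'rV[R[i]]_m) (M : 'M[R[i]]_(m, n + n)) :
  lin (w *m M) = \sum_(r < m) w 0 r *: lin (row r M).
Proof.
rewrite /lin; under eq_bigr do rewrite !mxE scaler_suml.
rewrite exchange_big; apply: eq_bigr => r _; rewrite scaler_sumr.
by apply: eq_bigr => a _; rewrite !mxE scalerA.
Qed.

Definition mode_mx : 'M[R[i]]_(n + n) := block_mx 0 1%:M (-1)%:M 0.

Lemma mode_mx_sqr : mode_mx *m mode_mx = (-1)%:M.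
Proof.
rewrite mulmx_block !mulmx0 !mul0mx !add0r !addr0 mul1mx mulmx1.
by rewrite -scalar_mx_block.
Qed.

(* The 2n operators d_i, d_i^† have the invertible commutator matrix
   [mode_mx], so their coordinate matrix is invertible as well. *)
Lemma lin_mode_comb (d : 'I_n -> A) (X : 'M[R[i]]_(n, n + n)) :
  (forall i j, comm (d i) (st (d j)) = (i == j)%:R) ->
  (forall i j, comm (d i) (d j) = 0) ->
  (forall i, d i = lin (row i X)) ->
  forall u, exists x y, lin u = mode_comb d x y.
Proof.
move=> comm_d_std comm_d_d d_lin u.
pose N := col_mx X (map_mx conjc X).
have lin_Nl i : lin (row (lshift n i) N) = d i by rewrite rowKu d_lin.
have lin_Nr i : lin (row (rshift n i) N) = st (d i).
  by rewrite rowKd d_lin st_lin map_row.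
have gram_N : N *m ccr_mx *m N^T = mode_mx.
  apply/matrixP => r s; apply: (fmorph_inj (in_alg A)).
  have -> : (N *m ccr_mx *m N^T) r s = (row r N *m ccr_mx *m (row s N)^T) 0 0.
    rewrite !mxE; apply: eq_bigr => b _; rewrite !mxE; congr (_ * _).
    by apply: eq_bigr => a _; rewrite !mxE.
  rewrite /= -comm_lin /mode_mx -[r]splitK -[s]splitK.
  case: (split r) => i; case: (split s) => j /=; rewrite ?lin_Nl ?lin_Nr.
  - by rewrite comm_d_d block_mxEul mxE scale0r.
  - by rewrite comm_d_std block_mxEur mxE scaler_nat.
  - by rewrite commC comm_d_std block_mxEdl mxE eq_sym mulNrn scaleNr scaler_nat.
  - by rewrite -st_comm comm_d_d st0 block_mxEdr mxE scale0r.
have N_inv : (ccr_mx *m N^T *m - mode_mx) *m N = 1%:M.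
  by apply: mulmx1C; rewrite !mulmxA gram_N mulmxN mode_mx_sqr raddfN opprK.
pose w := u *m (ccr_mx *m N^T *m - mode_mx).
exists (fun i => w 0 (lshift n i)), (fun i => w 0 (rshift n i)).
have -> : u = w *m N by rewrite -mulmxA N_inv mulmx1.
rewrite lin_mul big_split_ord /= -big_split; apply: eq_bigr => i _.
by rewrite lin_Nl lin_Nr.
Qed.

Lemma lin_row_mx (a b : 'M[R[i]]_n) i :
  lin (row i (row_mx a b)) = \sum_(j < n) (a i j *: p j + b i j *: q j).
Proof.
rewrite /lin big_split_ord /= -big_split; apply: eq_bigr => j _.
by rewrite /ccr_gen !mxE (unsplitK (inl j)) (unsplitK (inr j)).
Qed.

Lemma card_freq_leq H om om' c c' d d' (la : R) :
  diag_form st p q H om c d -> diag_form st p q H om' c' d' ->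
  (#|[set j | om' j == la]| <= #|[set i | om i == la]|)%N.
Proof.
move=> [[a [b d_pq]] comm_d_std comm_d_d H_d].
move=> [[a' [b' d'_pq]] comm_d'_std comm_d'_d H_d'].
have d_lin i : d i = lin (row i (row_mx a b)) by rewrite lin_row_mx.
have /fin_all_exists [xy d'_comb] :
    forall j, exists xy, d' j = mode_comb d xy.1 xy.2.
  move=> j; rewrite d'_pq -lin_row_mx.
  have [x [y ->]] := lin_mode_comb comm_d_std comm_d_d d_lin (row j (row_mx a' b')).
  by exists (x, y).
apply: (card_leq_of_gram (al := fun j => (xy j).1) (be := fun j => (xy j).2)).
  move=> j k; apply: (fmorph_inj (in_alg A)).
  rewrite /= -(comm_mode_comb comm_d_std comm_d_d) -!d'_comb.
  by rewrite comm_d'_std /= scaler_nat.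
move=> j i; rewrite !inE => /eqP om'_j om_i.
apply: (mode_comb_eigen comm_d_std comm_d_d (c := c) (y := (xy j).2) _ om_i).
have -> : dirac_sum d om c = dirac_sum d' om' c' by rewrite /dirac_sum -H_d -H_d'.
by rewrite -d'_comb comm_dirac_sum_d // om'_j.
Qed.

End CanonicalPairs.
End Star.

Lemma count_mem_map_enum (R : eqType) (T : finType) (f : T -> R) r :
  count_mem r [seq f i | i <- enum T] = #|[set i | f i == r]|.
Proof.
rewrite count_map cardsE cardE /enum_mem size_filter count_filter.
by apply: eq_count => x /=; rewrite andbT.
Qed.

Theorem theorem6 (R : realType) (n : nat) (A : algType R[i]) (st : A -> A)
  (p q : 'I_n -> A) (mu kappa gamma : 'M[R]_n) :
  is_star st -> CCR st p q -> mu^T = mu -> kappa^T = kappa ->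
  dirac_diagonalizable st p q (quadH mu kappa gamma p q) ->
  forall (omega omega' : 'I_n -> R) (c c' : R) (d d' : 'I_n -> A),
    diag_form st p q (quadH mu kappa gamma p q) omega c d ->
    diag_form st p q (quadH mu kappa gamma p q) omega' c' d' ->
    perm_eq [seq omega i | i <- enum 'I_n] [seq omega' i | i <- enum 'I_n].
Proof.
move=> st_star pq_ccr _ _ _ om om' c c' d d' diag_d diag_d'.
apply/allP => la _; rewrite /= !count_mem_map_enum eqn_leq.
by rewrite (card_freq_leq st_star pq_ccr _ diag_d diag_d')
  (card_freq_leq st_star pq_ccr _ diag_d' diag_d).
Qed.
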